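(* Let $G$ be a connected nontrivial graph with $m$ vertices and let $n\geq4$. If $\min\{n^2\lambda(G),\ (n-1)(m+2e(G))\}> 2n\delta(G)+2n-4$, then $G\boxtimes K_n$ is super restricted edge-connected.
   Context: All graphs are finite, simple and undirected; ''nontrivial'' means having at least two vertices. $K_n$ denotes the complete graph on $n$ vertices. For a graph $G$: $e(G)=|E(G)|$; $\delta(G)$ is the minimum degree; $\lambda(G)$ is the edge-connectivity. A restricted edge-cut of a connected graph $G$ is a set $S\subseteq E(G)$ such that $G-S$ is disconnected and every component of $G-S$ has at least $2$ vertices; $\lambda'(G)$ is the minimum cardinality of a restricted edge-cut. A graph is super restricted edge-connected if every minimum restricted edge-cut $S$ isolates an edge, i.e. some component of $G-S$ consists of exactly two (adjacent) vertices. The strong product $G\boxtimes H$ has vertex set $V(G)\times V(H)$, with $(x_1,y_1)$ and $(x_2,y_2)$ adjacent iff either $x_1=x_2$ and $y_1y_2\in E(H)$, or $y_1=y_2$ and $x_1x_2\in E(G)$, or $x_1x_2\in E(G)$ and $y_1y_2\in E(H)$. *)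

From mathcomp Require Import all_boot.
Set Implicit Arguments. Unset Strict Implicit. Unset Printing Implicit Defensive.

Section Graphs.
Variable T : finType.
Implicit Type e : rel T.

Definition simple_graph e := symmetric e /\ irreflexive e.

Definition edges e : {set {set T}} :=
  [set A : {set T} | [exists x, exists y, e x y && (A == [set x; y])]].

Definition nedges e : nat := #|edges e|.

Definition degree e (x : T) : nat := #|[set y | e x y]|.

(* minimum degree delta(G) (graph assumed nonempty) *)
Definition min_degree e : nat := \big[minn/#|T|]_(x : T) degree e x.

Definition connected_graph e := forall x y : T, connect e x y.

Definition del_edges e (S : {set {set T}}) : rel T :=
  fun x y => e x y && ([set x; y] \notin S).

Definition comp_of e (S : {set {set T}}) (x : T) : {set T} :=
  [set y | connect (del_edges e S) x y].

Definition is_edge_cut e (S : {set {set T}}) :=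
  (S \subset edges e) && [exists x, exists y, ~~ connect (del_edges e S) x y].

Definition edge_conn e : nat :=
  \big[minn/#|edges e|]_(S : {set {set T}} | is_edge_cut e S) #|S|.

Definition is_restricted_edge_cut e (S : {set {set T}}) :=
  is_edge_cut e S && [forall x, 2 <= #|comp_of e S x|].

Definition is_min_restricted_edge_cut e (S : {set {set T}}) :=
  is_restricted_edge_cut e S /\
  forall S' : {set {set T}}, is_restricted_edge_cut e S' -> #|S| <= #|S'|.

(* every minimum restricted edge cut isolates an edge *)
Definition super_restricted_edge_connected e :=
  forall S : {set {set T}}, is_min_restricted_edge_cut e S ->
    exists x : T, #|comp_of e S x| = 2.

End Graphs.

Definition complete_graph (n : nat) : rel 'I_n := fun i j => i != j.

Definition strong_product (T U : finType) (eG : rel T) (eH : rel U) : rel (T * U) :=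
  fun p q => [|| (p.1 == q.1) && eH p.2 q.2,
                (p.2 == q.2) && eG p.1 q.1
              | eG p.1 q.1 && eH p.2 q.2].
Arguments complete_graph : clear implicits.

From mathcomp Require Import all_boot zify.
Set Implicit Arguments. Unset Strict Implicit. Unset Printing Implicit Defensive.

(* Let S be a minimum restricted edge-cut of H = G ⊠ K_n. For a vertex x of
   minimum degree δ, the edges at (x,0) or (x,1) other than the edge between
   them form a restricted cut of size 2nδ + 2n - 4, so |S| ≤ 2nδ + 2n - 4.
   If no component of H - S were an edge, some component X and its complement
   would both have at least three vertices, while all edges leaving X lie in S.
   With a_x = |X ∩ ({x} × K_n)|, the number of edges leaving X is
     Σ_x a_x (n - a_x) + Σ_{x ~ y} a_x (n - a_y)   (ordered pairs x ~ y).
   If some fibre of X is full and another empty, each level set {x | a_x > t},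
   t < n, is an edge cut of G, so X has at least n²λ(G) leaving edges.
   Otherwise, after complementing X if needed, no fibre is full and there are
   at least (n - 1) Σ_{a_x > 0} (1 + deg x) leaving edges: at least
   (n - 1)(m + 2e(G)) if X meets every fibre, at least 3(n - 1)(1 + δ) if it
   meets three, and the case of two fibres is settled by direct computation.
   Each case contradicts the hypothesis. *)

(** * Finite sets and sums *)

Lemma geq_bigmin_cond (I : finType) (P : pred I) (F : I -> nat) d i :
  P i -> \big[minn/d]_(j | P j) F j <= F i.
Proof.
move=> Pi; have : i \in index_enum I by rewrite mem_index_enum.
elim: (index_enum I) => [//|j r IHr]; rewrite inE big_cons.
case/orP=> [/eqP <-|ir]; first by rewrite Pi geq_minl.
by case: ifP => _; rewrite ?geq_min IHr ?orbT.
Qed.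

Lemma bigmin_attained (I : finType) (P : pred I) (F : I -> nat) d :
  \big[minn/d]_(j | P j) F j = d \/ exists2 i, P i & \big[minn/d]_(j | P j) F j = F i.
Proof.
apply: (big_ind (fun v => v = d \/ exists2 i, P i & v = F i)); first by left.
- by move=> u v Hu Hv; rewrite /minn; case: ifP.
- by move=> i Pi; right; exists i.
Qed.

Lemma sum_pair (I J : finType) (F : I * J -> nat) : \sum_p F p = \sum_i \sum_j F (i, j).
Proof. by rewrite pair_bigA; apply: eq_bigr => -[]. Qed.

Lemma card_set_pair (I J : finType) (S : {set I * J}) :
  #|S| = \sum_i #|[set j | (i, j) \in S]|.
Proof.
rewrite -sum1_card big_mkcond sum_pair; apply: eq_bigr => i _.
by rewrite -sum1dep_card [RHS]big_mkcond.
Qed.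

Lemma sum_ord_in_range b c m : \sum_(t < m) ((b <= t) && (t < c)) = minn c m - b.
Proof.
elim: m => [|m IHm]; first by rewrite big_ord0; lia.
by rewrite big_ord_recr /= IHm; case: (leqP b m); case: (ltnP m c); lia.
Qed.

Lemma subset_set2_card_le2 (T : finType) (A : {set T}) :
  1 < #|T| -> #|A| <= 2 -> exists u w : T, u != w /\ A \subset [set u; w].
Proof.
move=> /card_gt1P [u0 [w0 [_ _ uw0]]].
case: (ltngtP #|A| 1) => [|A2|/eqP/cards1P [u ->]].
- rewrite ltnS leqn0 cards_eq0 => /eqP -> _.
  by exists u0, w0; rewrite sub0set.
- rewrite leq_eqVlt ltnS leqNgt A2 orbF => /cards2P [u [w [uw ->]]].
  by exists u, w.
- have [w wu] : exists w, w != u.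
    by case: (eqVneq u0 u) => [<-|]; [exists w0; rewrite eq_sym | exists u0].
  by exists u, w; rewrite eq_sym wu sub1set set21.
Qed.

Lemma exists_notin_card (T : finType) (A : {set T}) : #|A| < #|T| -> exists x, x \notin A.
Proof.
move=> A_lt; have /card_gt0P [x] : 0 < #|~: A| by rewrite cardsCs setCK; lia.
by rewrite inE; exists x.
Qed.

Lemma card_set3_le (T : finType) (i j k : T) : #|[set i; j; k]| <= 3.
Proof. by rewrite -setUA cardsU1 cards2; case: (_ \in _); case: (_ != _). Qed.

(** * Edge cuts *)

Definition crossing (T : finType) (e : rel T) (A : {set T}) : {set T * T} :=
  [set p | (p.1 \in A) && (p.2 \notin A) && e p.1 p.2].

Definition isolating_cut (T : finType) (e : rel T) (p q : T) : {set {set T}} :=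
  [set E in edges e | (E != [set p; q]) && ((p \in E) || (q \in E))].

Section Graph.
Variables (T : finType) (e : rel T).

Lemma sum_nbrs_const x c : \sum_(y | e x y) c = c * degree e x.
Proof. by rewrite /degree -sum1dep_card big_distrr /= muln1. Qed.

Lemma edge_conn_le_card S : is_edge_cut e S -> edge_conn e <= #|S|.
Proof. exact: geq_bigmin_cond. Qed.

Lemma degree_gt0 x : connected_graph e -> 1 < #|T| -> 0 < degree e x.
Proof.
move=> conn_e /card_gt1P [y1 [y2 [_ _ y12]]].
have [y xy] : exists y, x != y.
  by case: (eqVneq x y1) => [->|]; [exists y2 | exists y1].
case/connectP: (conn_e x y) => [[|z p]] /=; first by move=> _ yx; rewrite yx eqxx in xy.
by case/andP => exz _ _; apply/card_gt0P; exists z; rewrite inE.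
Qed.

Lemma comp_of_card_ge2 S v w : v != w -> del_edges e S v w -> 1 < #|comp_of e S v|.
Proof.
move=> vw Svw; apply/card_gt1P; exists v, w.
by rewrite !inE connect0 connect1.
Qed.

Lemma card_crossing_comp_le S x : #|crossing e (comp_of e S x)| <= #|S|.
Proof.
set X := comp_of e S x.
have inj : {in crossing e X &, injective (fun p : T * T => [set p.1; p.2])}.
  move=> [u v] [u' v']; rewrite !inE /= => /andP [/andP [uX vX] _] /andP [/andP [uX' vX'] _] E.
  have /set2P [uu'|uv'] : u \in [set u'; v'] by rewrite -E set21.
    have /set2P [vu'|->] : v \in [set u'; v'] by rewrite -E set22.
      by rewrite vu' uX' in vX.
    by rewrite uu'.
  by rewrite -uv' uX in vX'.
rewrite -(card_in_imset inj); apply/subset_leq_card/subsetP => E /imsetP [[u v]].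
rewrite inE /= => /andP [/andP [uX vX] euv] ->; apply: contraR vX => uvS.
rewrite /X /comp_of !inE in uX *; apply: (connect_trans uX); apply: connect1.
by rewrite /del_edges euv uvS.
Qed.

Lemma card_crossing_level (a : T -> nat) t :
  #|crossing e [set x | t < a x]| = \sum_x \sum_(y | e x y) ((a y <= t) && (t < a x)).
Proof.
rewrite card_set_pair; apply: eq_bigr => x _.
rewrite -sum1dep_card big_mkcond [RHS]big_mkcond /=; apply: eq_bigr => y _; rewrite !inE /= -leqNgt.
by case: (e x y); case: (t < a x); case: (a y <= t).
Qed.

Section Symmetric.
Hypothesis e_sym : symmetric e.

Lemma closed_del_edges (S : {set {set T}}) (C : {set T}) :
  (forall u v, u \in C -> v \notin C -> e u v -> [set u; v] \in S) ->
  closed (del_edges e S) C.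
Proof.
move=> cut_C u v /andP [euv uvS].
case uC: (u \in C); case vC: (v \in C) => //.
  by rewrite cut_C ?uC ?vC in uvS.
by rewrite setUC cut_C ?uC ?vC // e_sym in uvS.
Qed.

Lemma edge_conn_le_crossing (A : {set T}) x0 z0 :
  x0 \in A -> z0 \notin A -> edge_conn e <= #|crossing e A|.
Proof.
move=> x0A z0A; pose edge_of (p : T * T) := [set p.1; p.2].
apply: leq_trans (leq_imset_card edge_of _); apply: edge_conn_le_card; apply/andP; split.
  apply/subsetP => E /imsetP [[u v]]; rewrite inE /= => /andP [_ euv] ->.
  by rewrite inE; apply/existsP; exists u; apply/existsP; exists v; rewrite euv eqxx.
apply/existsP; exists x0; apply/existsP; exists z0; apply: contra z0A => conn_x0z0.
suff clA : closed (del_edges e (edge_of @: crossing e A)) A.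
  by rewrite -(closed_connect clA conn_x0z0).
apply: closed_del_edges => u v uA vA euv; apply/imsetP; exists (u, v) => //.
by rewrite inE /= uA vA euv.
Qed.

Lemma card_crossingC (A : {set T}) : #|crossing e (~: A)| = #|crossing e A|.
Proof.
have swap_inj : injective (fun p : T * T => (p.2, p.1)) by move=> [? ?] [? ?] [-> ->].
rewrite -[RHS](card_imset _ swap_inj); apply: eq_card => -[u v].
apply/idP/imsetP => [|[[u' v']]]; rewrite !inE /= ?negbK.
  by move=> /andP [/andP [uA vA] euv]; exists (v, u); rewrite // inE /= vA uA e_sym.
by move=> /andP [/andP [uA vA] euv] [-> ->]; rewrite uA vA e_sym.
Qed.

(* Co-area: the edge xy is counted once for each level t < m with
   a y <= t < a x, and every level set {x | t < a x} is an edge cut. *)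
Lemma edge_conn_le_sum_subn (a : T -> nat) m x0 z0 :
  (forall x, a x <= m) -> a x0 = m -> a z0 = 0 ->
  m * edge_conn e <= \sum_x \sum_(y | e x y) (a x - a y).
Proof.
move=> a_le ax0 az0.
have -> : \sum_x \sum_(y | e x y) (a x - a y) =
          \sum_(t < m) #|crossing e [set x | t < a x]|.
  under [RHS]eq_bigr => t _ do rewrite card_crossing_level.
  rewrite exchange_big /=; apply: eq_bigr => x _.
  rewrite exchange_big /=; apply: eq_bigr => y _.
  by rewrite sum_ord_in_range (minn_idPl (a_le x)).
rewrite -{1}(card_ord m) -sum_nat_const; apply: leq_sum => t _.
by apply: (edge_conn_le_crossing (x0 := x0) (z0 := z0)); rewrite inE ?ax0 ?az0.
Qed.

Lemma sum_edges_sym (F : T -> T -> nat) :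
  \sum_x \sum_(y | e x y) F x y = \sum_x \sum_(y | e x y) F y x.
Proof.
under eq_bigr => x _ do rewrite big_mkcond.
rewrite exchange_big /=; apply: eq_bigr => x _; rewrite [RHS]big_mkcond /=.
by apply: eq_bigr => y _; rewrite e_sym.
Qed.

Lemma leq_sum_edges_sym (F G : T -> T -> nat) :
  (forall x y, e x y -> G x y + G y x <= F x y + F y x) ->
  \sum_x \sum_(y | e x y) G x y <= \sum_x \sum_(y | e x y) F x y.
Proof.
move=> GF.
have sym2 K : (\sum_x \sum_(y | e x y) K x y).*2 =
              \sum_x \sum_(y | e x y) (K x y + K y x).
  rewrite -addnn {2}sum_edges_sym -big_split /=.
  by apply: eq_bigr => x _; rewrite -big_split.
by rewrite -leq_double !sym2; apply: leq_sum => x _; apply: leq_sum => y; apply: GF.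
Qed.

Lemma pendant_edge_component u w z : connected_graph e -> e u w ->
  degree e u = 1 -> degree e w = 1 -> z \in [set u; w].
Proof.
move=> conn_e euw du dw.
have nbrsE x y : degree e x = 1 -> e x y -> [set v | e x v] = [set y].
  move=> /eqP/cards1P [c Nx] exy; have : y \in [set v | e x v] by rewrite inE.
  by rewrite Nx => /set1P ->.
have stay x y : e x y -> x \in [set u; w] -> y \in [set u; w].
  move=> exy /set2P [xu|xw]; subst x.
    have : y \in [set v | e u v] by rewrite inE.
    by rewrite (nbrsE _ _ du euw) => /set1P ->; rewrite set22.
  have : y \in [set v | e w v] by rewrite inE.
  by rewrite (nbrsE w u dw) 1?e_sym // => /set1P ->; rewrite set21.
have cl : closed e [set u; w].
  by move=> x y exy; apply/idP/idP; apply: stay; rewrite // e_sym.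
by rewrite -(closed_connect cl (conn_e u z)) set21.
Qed.

Lemma card_isolating_cut p q : e p q ->
  #|isolating_cut e p q| <= (degree e p).-1 + (degree e q).-1.
Proof.
move=> epq.
have at_end c a b : e a b -> c \in [set a; b] -> exists2 v, e c v & [set a; b] = [set c; v].
  by move=> eab /set2P [->|->]; [exists b | exists a; rewrite 1?setUC // e_sym].
pose at_p := [set [set p; v] | v in [set v | e p v] :\ q].
pose at_q := [set [set q; v] | v in [set v | e q v] :\ p].
have sub : isolating_cut e p q \subset at_p :|: at_q.
  apply/subsetP => E; rewrite !inE => /and3P [/existsP [a /existsP [b /andP [eab /eqP ->]]]].
  move=> ne_pq /orP [pE|qE].
    have [v epv Ev] := at_end _ _ _ eab pE; rewrite Ev in ne_pq *.
    apply/orP; left; apply/imsetP; exists v; rewrite // !inE epv andbT.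
    by apply: contraNneq ne_pq => ->.
  have [v eqv Ev] := at_end _ _ _ eab qE; rewrite Ev in ne_pq *.
  apply/orP; right; apply/imsetP; exists v; rewrite // !inE eqv andbT.
  by apply: contraNneq ne_pq => ->; rewrite setUC.
have card_nbrsD c d : e c d -> #|[set v | e c v] :\ d| = (degree e c).-1.
  by move=> ecd; rewrite /degree (cardsD1 d [set v | e c v]) inE ecd.
apply: leq_trans (subset_leq_card sub) _; rewrite cardsU.
apply: leq_trans (leq_subr _ _) (leq_add _ _).
  by rewrite -(card_nbrsD p q epq) leq_imset_card.
by rewrite -(card_nbrsD q p) 1?e_sym // leq_imset_card.
Qed.

Lemma closed_isolating_cut p q : closed (del_edges e (isolating_cut e p q)) [set p; q].
Proof.
apply: closed_del_edges => u v uC vC euv; rewrite !inE; apply/and3P; split.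
- by apply/existsP; exists u; apply/existsP; exists v; rewrite euv eqxx.
- by apply: contraNneq vC => <-; rewrite set22.
- by case/set2P: uC => ->; rewrite eqxx ?orbT.
Qed.

Lemma del_edges_sym S : symmetric (del_edges e S).
Proof. by move=> u v; rewrite /del_edges e_sym setUC. Qed.

Lemma restricted_cut_large_comp S : is_restricted_edge_cut e S ->
  (forall x, #|comp_of e S x| != 2) ->
  exists x, 2 < #|comp_of e S x| /\ 2 < #|~: comp_of e S x|.
Proof.
case/andP => /andP [_ /existsP [x /existsP [y nxy]]] /forallP comp_ge2 no2.
have comp_gt2 z : 2 < #|comp_of e S z| by rewrite ltn_neqAle eq_sym no2 comp_ge2.
exists x; split => //; apply: leq_trans (comp_gt2 y) (subset_leq_card _).
apply/subsetP => z; rewrite !inE => yz; apply: contra nxy => xz.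
by apply: (connect_trans xz); rewrite (sym_connect_sym (del_edges_sym S)).
Qed.

End Symmetric.

Lemma min_degree_le x : min_degree e <= degree e x.
Proof. exact: geq_bigmin_cond. Qed.

Section Simple.
Hypothesis e_simple : simple_graph e.

Lemma degree_lt_card x : degree e x < #|T|.
Proof.
rewrite /degree; apply/proper_card/properP; split; first exact/subsetP.
by exists x; rewrite // inE; case: e_simple => _ ->.
Qed.

Lemma min_degree_attained : 0 < #|T| -> exists x, degree e x = min_degree e.
Proof.
(* the default value [#|T|] of the minimum is not a degree *)
case/card_gt0P => x0 _.
case: (bigmin_attained xpredT (degree e) #|T|) => [dT|[x _ dx]]; last by exists x.
by have := degree_lt_card x0; rewrite ltnNge -dT min_degree_le.
Qed.

Lemma handshake : 2 * nedges e <= \sum_x degree e x.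
Proof.
case: e_simple => e_sym e_irr.
pose arcs := [set p : T * T | e p.1 p.2].
have -> : \sum_x degree e x = #|arcs|.
  by rewrite card_set_pair; apply: eq_bigr => x _; apply: eq_card => y; rewrite !inE.
have edgesE : edges e = [set [set p.1; p.2] | p in arcs].
  apply/setP => E; rewrite inE; apply/existsP/imsetP => [[x /existsP [y /andP [exy /eqP ->]]]|[p]].
    by exists (x, y); rewrite ?inE.
  by rewrite inE => ep ->; exists p.1; apply/existsP; exists p.2; rewrite ep eqxx.
rewrite -sum1_card (partition_big_imset (fun p : T * T => [set p.1; p.2])) -edgesE.
rewrite /nedges mulnC -sum_nat_const; apply: leq_sum => E.
rewrite inE => /existsP [x /existsP [y /andP [exy /eqP ->]]].
have eyx : e y x by rewrite e_sym.
have yx : y != x by apply: contraTneq exy => ->; rewrite e_irr.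
rewrite sum1dep_card; apply/card_gt1P; exists (x, y), (y, x).
by rewrite !inE /= [[set y; x]]setUC exy eyx eqxx xpair_eqE negb_and yx orbT.
Qed.

End Simple.

End Graph.

(** * Arithmetic *)

Lemma mul_subn_le_compl n a b : a <= n -> b <= n -> n * (a - b) <= a * (n - b).
Proof. by move=> an bn; case: (leqP a b) => ab; nia. Qed.

Lemma compl_mul_lb n a : a < n -> (n - 1) * (0 < a) <= a * (n - a).
Proof. by case: a => [|a] /=; nia. Qed.

Lemma compl_mul2_lb n a b : a < n -> b < n ->
  (n - 1) * ((0 < a) + (0 < b)) <= a * (n - b) + b * (n - a).
Proof. by case: a => [|a]; case: b => [|b] /=; nia. Qed.

Lemma two_fibre_far_bound n d a b du dw : 3 < n -> 0 < d -> d <= du -> d <= dw ->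
  a < n -> b < n -> 2 < a + b ->
  2 * n * d + 2 * n - 4 < a * (n - a) + a * (n * du) + b * (n - b) + b * (n * dw).
Proof.
move=> n4 d1 du1 dw1 an bn s3.
have : (n - 1) * ((0 < a) + (0 < b)) <= a * (n - a) + b * (n - b).
  by case: a an s3 => [|a]; case: b bn => [|b] /=; nia.
have : 3 * d <= a * du + b * dw by nia.
nia.
Qed.

Lemma mul_subn_shift n a b du : b <= n -> 0 < du ->
  a * (n * du - b) = a * (n - b) + n * (a * (du - 1)).
Proof.
move=> bn du1; have -> : n * du - b = n - b + n * (du - 1).
  by rewrite mulnBr muln1; have := leq_pmulr n du1; lia.
by rewrite mulnDr mulnCA.
Qed.

Lemma split_sum_product_lb n s t : 1 < s -> 1 < t -> s + t = 2 * n -> 4 * n - 4 <= s * t.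
Proof. by move=> *; nia. Qed.

Lemma split_sum_product_gt n s t : 3 < n -> 2 < s -> n < t -> s + t = 2 * n -> 4 * n - 4 < s * t.
Proof. by move=> *; nia. Qed.

Lemma two_fibre_adjacent_bound n d a b du dw : 3 < n -> 0 < d -> d <= du -> d <= dw ->
  a < n -> b < n -> 2 < a + b -> (du = 1 -> dw = 1 -> a * b = 0) ->
  2 * n * d + 2 * n - 4 < a * (n - a) + a * (n * du - b) + b * (n - b) + b * (n * dw - a).
Proof.
move=> n4 d1 du1 dw1 an bn s3 pendant.
have du_gt0 := leq_trans d1 du1; have dw_gt0 := leq_trans d1 dw1.
rewrite (mul_subn_shift a (ltnW bn) du_gt0) (mul_subn_shift b (ltnW an) dw_gt0).
set s := a + b in s3 *; set t := (n - a) + (n - b); set m := a * (du - 1) + b * (dw - 1).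
have -> : a * (n - a) + (a * (n - b) + n * (a * (du - 1))) + b * (n - b) +
          (b * (n - a) + n * (b * (dw - 1))) = s * t + n * m.
  by rewrite /s /t /m mulnDl !mulnDr; lia.
have st : s + t = 2 * n by rewrite /s /t; lia.
have st_lb : 4 * n - 4 <= s * t by apply: split_sum_product_lb; rewrite /s /t; lia.
rewrite -mulnA; case: (ltnP 1 d) => [d2|d_le1].
  have : 3 * (d - 1) <= m.
    apply: (@leq_trans (s * (d - 1))); first by rewrite leq_mul2r s3 orbT.
    by rewrite /m mulnDl leq_add // leq_mul2l leq_sub2r ?orbT.
  rewrite -(leq_pmul2l (ltnW (ltnW (ltnW n4)))) mulnCA mulnBr muln1 => nm.
  have : 2 * n <= n * d by rewrite [2 * n]mulnC leq_mul2l d2 orbT.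
  lia.
have -> : d = 1 by lia.
rewrite muln1; case: (posnP m) => [m0|m_gt0]; last first.
  have : n <= n * m by rewrite leq_pmulr.
  lia.
have [a0|b0] : a = 0 \/ b = 0.
  move: m0; rewrite /m => /eqP; rewrite addn_eq0 !muln_eq0 !subn_eq0.
  case/andP => /orP [/eqP|du_le1]; first by left.
  case/orP => [/eqP|dw_le1]; first by right.
  have /eqP : a * b = 0 by apply: pendant; apply/eqP; rewrite eqn_leq ?du_le1 ?dw_le1.
  by rewrite muln_eq0 => /orP [/eqP|/eqP]; [left | right].
all: rewrite m0 muln0 addn0 -mulnDl; apply: split_sum_product_gt; rewrite /s /t; lia.
Qed.

Lemma support3_bound n d : 3 < n -> 0 < d -> 2 * n * d + 2 * n - 4 < (n - 1) * (3 * (1 + d)).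
Proof. by move=> *; nia. Qed.

(** * The strong product with K_n *)

Lemma strong_product_sym (T U : finType) (eG : rel T) (eH : rel U) :
  symmetric eG -> symmetric eH -> symmetric (strong_product eG eH).
Proof. by move=> sG sH [x i] [y j]; rewrite /strong_product /= sG sH (eq_sym x) (eq_sym i). Qed.

Lemma complete_graph_sym n : symmetric (complete_graph n).
Proof. by move=> i j; rewrite /complete_graph eq_sym. Qed.

Section StrongProduct.
Variables (T : finType) (e : rel T) (n : nat).
Hypothesis e_simple : simple_graph e.

Local Notation V := (T * 'I_n)%type.
Local Notation H := (strong_product e (complete_graph n)).
Implicit Types (X : {set V}) (x y : T) (i j : 'I_n).

Let e_sym : symmetric e. Proof. by case: e_simple. Qed.
Let e_irr : irreflexive e. Proof. by case: e_simple. Qed.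
Let H_sym : symmetric H := strong_product_sym e_sym (@complete_graph_sym n).

Lemma strong_product_layer x i j : H (x, i) (x, j) = (i != j).
Proof. by rewrite /strong_product /= eqxx e_irr andbF orbF. Qed.

Lemma strong_product_across x y i j : x != y -> H (x, i) (y, j) = e x y.
Proof.
move=> /negbTE xy; rewrite /strong_product /complete_graph /= xy.
by case: (e x y); case: (i == j).
Qed.

Definition fibre_size (X : {set V}) x := #|[set i | (x, i) \in X]|.

Lemma fibre_size_le X x : fibre_size X x <= n.
Proof. by apply: leq_trans (max_card _) _; rewrite card_ord. Qed.

Lemma card_fibre_out X x : #|[set i | (x, i) \notin X]| = n - fibre_size X x.
Proof. by rewrite cardsCs card_ord; congr (_ - _); apply: eq_card => i; rewrite !inE negbK. Qed.

Lemma fibre_sizeC X x : fibre_size (~: X) x = n - fibre_size X x.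
Proof. by rewrite -card_fibre_out; apply: eq_card => i; rewrite !inE. Qed.

Lemma card_out_nbrs X x i : (x, i) \in X ->
  #|[set v | (v \notin X) && H (x, i) v]| =
  (n - fibre_size X x) + \sum_(y | e x y) (n - fibre_size X y).
Proof.
move=> xiX; rewrite card_set_pair (bigD1 x) //=; congr (_ + _).
  rewrite -card_fibre_out; apply: eq_card => j; rewrite !inE strong_product_layer.
  by case: eqVneq => [<-|]; rewrite ?xiX ?andbT.
rewrite [RHS](eq_bigl (fun y => (y != x) && e x y)); last first.
  by move=> y; case: eqVneq => [->|]; rewrite ?e_irr.
rewrite big_mkcondr; apply: eq_bigr => y yx.
case: ifP => exy.
  rewrite -card_fibre_out; apply: eq_card => j.
  by rewrite !inE strong_product_across 1?eq_sym // exy andbT.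
by apply: eq_card0 => j; rewrite !inE strong_product_across 1?eq_sym // exy andbF.
Qed.

Lemma degree_strong_product x i : degree H (x, i) = n.-1 + n * degree e x.
Proof.
have fibre1 y : fibre_size [set (x, i)] y = (y == x).
  rewrite /fibre_size; case: eqVneq => [->|yx].
    by apply/eqP/cards1P; exists i; apply/setP => j; rewrite !inE xpair_eqE eqxx.
  by apply: eq_card0 => j; rewrite !inE xpair_eqE (negbTE yx).
transitivity #|[set v | (v \notin [set (x, i)]) && H (x, i) v]|.
  apply: eq_card => v; rewrite !inE.
  by case: eqVneq => [->|]; rewrite ?strong_product_layer ?eqxx.
rewrite card_out_nbrs ?set11 // fibre1 eqxx subn1; congr (_ + _).
rewrite -sum_nbrs_const; apply: eq_bigr => y exy.
have yx : y != x by apply: contraTneq exy => ->; rewrite e_irr.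
by rewrite fibre1 (negbTE yx) subn0.
Qed.

Lemma card_crossing_strong X : #|crossing H X| =
  \sum_x (fibre_size X x * (n - fibre_size X x) +
          \sum_(y | e x y) fibre_size X x * (n - fibre_size X y)).
Proof.
rewrite card_set_pair sum_pair; apply: eq_bigr => x _.
pose out := (n - fibre_size X x) + \sum_(y | e x y) (n - fibre_size X y).
rewrite (eq_bigr (fun i => if (x, i) \in X then out else 0)); last first.
  move=> i _; case: ifP => xiX; last by apply: eq_card0 => v; rewrite !inE /= xiX.
  by rewrite /out -(card_out_nbrs xiX) //; apply: eq_card => v; rewrite !inE /= xiX.
rewrite -big_mkcond /= (eq_bigl (mem [set i | (x, i) \in X])); last by move=> i; rewrite /= !inE.
by rewrite sum_nat_const -/(fibre_size X x) /out mulnDr big_distrr.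
Qed.

Lemma crossing_ge_full_empty X x0 z0 :
  fibre_size X x0 = n -> fibre_size X z0 = 0 -> n * (n * edge_conn e) <= #|crossing H X|.
Proof.
move=> ax0 az0; rewrite card_crossing_strong.
apply: (@leq_trans (n * \sum_x \sum_(y | e x y) (fibre_size X x - fibre_size X y))).
  by rewrite leq_mul2l (edge_conn_le_sum_subn e_sym (fibre_size_le X) ax0 az0) orbT.
rewrite big_distrr; apply: leq_sum => x _; apply: leq_trans (leq_addl _ _).
by rewrite big_distrr; apply: leq_sum => y _; apply: mul_subn_le_compl; apply: fibre_size_le.
Qed.

Lemma crossing_ge_support X : (forall x, fibre_size X x < n) ->
  (n - 1) * \sum_x (0 < fibre_size X x) * (1 + degree e x) <= #|crossing H X|.
Proof.
move=> a_lt; rewrite card_crossing_strong big_distrr /=.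
rewrite (eq_bigr (fun x => (n - 1) * (0 < fibre_size X x) +
                         \sum_(y | e x y) (n - 1) * (0 < fibre_size X x))); last first.
  by move=> x _; rewrite sum_nbrs_const !mulnDr muln1 mulnA.
rewrite !big_split /=; apply: leq_add.
  by apply: leq_sum => x _; apply: compl_mul_lb.
apply: leq_sum_edges_sym => // x y _.
by rewrite -mulnDr compl_mul2_lb.
Qed.

Lemma crossing_two_fibres X u w : u != w ->
  (forall x, x != u -> x != w -> fibre_size X x = 0) ->
  #|crossing H X| =
    fibre_size X u * (n - fibre_size X u) +
    fibre_size X u * (n * degree e u - (if e u w then fibre_size X w else 0)) +
    fibre_size X w * (n - fibre_size X w) +
    fibre_size X w * (n * degree e w - (if e u w then fibre_size X u else 0)).
Proof.
move=> uw a0.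
have nbrs_sum x o : (forall y, y != x -> y != o -> fibre_size X y = 0) ->
    \sum_(y | e x y) (n - fibre_size X y) =
    n * degree e x - (if e x o then fibre_size X o else 0).
  move=> ay0; rewrite sumnB => [|y _]; last exact: fibre_size_le.
  rewrite sum_nbrs_const mulnC; congr (_ - _).
  rewrite big_mkcond (bigD1 o) //= big1 ?addn0 // => y yo.
  by case: ifP => // exy; apply: ay0 => //; apply: contraTneq exy => ->; rewrite e_irr.
rewrite card_crossing_strong (bigD1 u) //= [\sum_(i | i != u) _](bigD1 w) 1?eq_sym //=.
rewrite [\sum_(i | (i != u) && (i != w)) _]big1 ?addn0; last first.
  by move=> x /andP [xu xw]; rewrite a0 // mul0n add0n big1 // => y _; rewrite mul0n.
rewrite -!big_distrr /= (nbrs_sum u w a0) (nbrs_sum w u) => [|y yw yu]; last exact: a0.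
by rewrite [e w u]e_sym !addnA.
Qed.

Section Bounds.
Hypotheses (e_conn : connected_graph e) (T_gt1 : 1 < #|T|) (n_gt3 : 3 < n).
Local Notation d := (min_degree e).
Local Notation xi := (2 * n * d + 2 * n - 4).

Lemma min_degree_gt0 : 0 < d.
Proof.
have [x <-] := min_degree_attained e_simple (ltnW T_gt1).
exact: degree_gt0 e_conn T_gt1.
Qed.

Lemma restricted_isolating_cut x i0 i1 : i0 != i1 ->
  is_restricted_edge_cut H (isolating_cut H (x, i0) (x, i1)).
Proof.
move=> i01; set p : V := (x, i0); set q : V := (x, i1); set S := isolating_cut H p q.
have Hpq : H p q by rewrite strong_product_layer.
have other (i : 'I_n) : exists j, j \notin [set i; i0; i1].
  by apply: exists_notin_card; rewrite card_ord; apply: leq_ltn_trans n_gt3; apply: card_set3_le.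
apply/andP; split; first (apply/andP; split).
- by apply/subsetP => E; rewrite inE => /andP [].
- have [j] := other i0; rewrite !inE !negb_or => /andP [/andP [j0 _] j1].
  apply/existsP; exists p; apply/existsP; exists (x, j).
  apply/negP => /(closed_connect (closed_isolating_cut H_sym (p:=p) (q:=q))).
  by rewrite set21 !inE /p /q !xpair_eqE eqxx (negbTE j0) (negbTE j1).
- apply/forallP => -[y i].
  have [/set2P [->|->]|vpq] := boolP ((y, i) \in [set p; q]).
  + apply: (@comp_of_card_ge2 _ _ _ _ q); first by rewrite xpair_eqE eqxx.
    by rewrite /del_edges Hpq !inE eqxx /= andbF.
  + apply: (@comp_of_card_ge2 _ _ _ _ p); first by rewrite xpair_eqE eqxx eq_sym.
    by rewrite del_edges_sym // /del_edges Hpq !inE eqxx /= andbF.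
  have [j] := other i; rewrite !inE !negb_or => /andP [/andP [ji j0] j1].
  apply: (@comp_of_card_ge2 _ _ _ _ (y, j)); first by rewrite xpair_eqE eqxx eq_sym.
  rewrite /del_edges strong_product_layer eq_sym ji !inE /=.
  have pj : p != (y, j) by rewrite xpair_eqE [i0 == _]eq_sym (negbTE j0) andbF.
  have qj : q != (y, j) by rewrite xpair_eqE [i1 == _]eq_sym (negbTE j1) andbF.
  move: vpq; rewrite !inE negb_or !(eq_sym (y, i)) => /andP [/negbTE -> /negbTE ->].
  by rewrite (negbTE pj) (negbTE qj) !andbF.
Qed.

Lemma card_isolating_cut_layer x i0 i1 : i0 != i1 ->
  #|isolating_cut H (x, i0) (x, i1)| <= 2 * n * degree e x + 2 * n - 4.
Proof.
move=> i01; apply: leq_trans (card_isolating_cut H_sym _) _; first by rewrite strong_product_layer.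
by rewrite !degree_strong_product; lia.
Qed.

Hypothesis xi_lt : xi < minn (n ^ 2 * edge_conn e) ((n - 1) * (#|T| + 2 * nedges e)).

Lemma crossing_gt_two_fibres Y u w z : (forall x, fibre_size Y x < n) -> u != w ->
  (forall x, x != u -> x != w -> fibre_size Y x = 0) -> fibre_size Y z = 0 ->
  2 < #|Y| -> xi < #|crossing H Y|.
Proof.
move=> a_lt uw a0 az Y_gt2.
have s_gt2 : 2 < fibre_size Y u + fibre_size Y w.
  move: Y_gt2; rewrite card_set_pair (bigD1 u) //= (bigD1 w) 1?eq_sym //=.
  by rewrite big1 ?addn0 // => x /andP [xu xw]; apply: a0.
have [du dw] := (min_degree_le e u, min_degree_le e w).
rewrite (crossing_two_fibres uw a0); case: ifP => euw.
  apply: two_fibre_adjacent_bound => // [|du1 dw1]; first exact: min_degree_gt0.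
  (* two adjacent pendant vertices make up the whole connected graph *)
  by case/set2P: (pendant_edge_component e_sym z e_conn euw du1 dw1) az => <- ->; rewrite ?muln0.
by rewrite !subn0; apply: two_fibre_far_bound => //; apply: min_degree_gt0.
Qed.

Lemma crossing_gt_nonfull Y : (forall x, fibre_size Y x < n) -> 2 < #|Y| ->
  xi < #|crossing H Y|.
Proof.
move=> a_lt Y_gt2; have supp := crossing_ge_support a_lt.
have [/forallP a_pos|] := boolP [forall x, 0 < fibre_size Y x].
  apply: leq_trans (leq_trans xi_lt (geq_minr _ _)) (leq_trans _ supp).
  rewrite leq_mul2l (eq_bigr (fun x => 1 + degree e x)) => [|x _]; last by rewrite a_pos mul1n.
  by rewrite big_split /= sum1_card leq_add2l (handshake e_simple) orbT.
rewrite negb_forall => /existsP [z]; rewrite lt0n negbK => /eqP az.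
set A := [set x | 0 < fibre_size Y x].
have [A_ge3|A_le2] := leqP 3 #|A|.
  apply: leq_trans (support3_bound n_gt3 min_degree_gt0) (leq_trans _ supp).
  rewrite leq_mul2l; apply/orP; right.
  apply: (@leq_trans (\sum_x (0 < fibre_size Y x) * (1 + d))).
    rewrite -big_distrl /=.
    have -> : \sum_x (0 < fibre_size Y x) = #|A|.
      by rewrite -sum1dep_card [RHS]big_mkcond; apply: eq_bigr => x _; case: (0 < _).
    by rewrite leq_mul2r A_ge3 orbT.
  by apply: leq_sum => x _; rewrite leq_mul2l leq_add2l min_degree_le orbT.
have [u [w [uw /subsetP A_uw]]] := subset_set2_card_le2 T_gt1 A_le2.
apply: (crossing_gt_two_fibres a_lt uw _ az Y_gt2) => x xu xw.
have : x \notin [set u; w] by rewrite !inE negb_or xu xw.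
by move/(contra (A_uw x)); rewrite inE lt0n negbK => /eqP.
Qed.

Lemma crossing_gt X : 2 < #|X| -> 2 < #|~: X| -> xi < #|crossing H X|.
Proof.
move=> X_gt2 Xc_gt2.
have [/forallP a_lt|] := boolP [forall x, fibre_size X x < n].
  exact: crossing_gt_nonfull.
rewrite negb_forall => /existsP [x0]; rewrite -leqNgt => ax0.
have {}ax0 : fibre_size X x0 = n by apply/eqP; rewrite eqn_leq fibre_size_le.
have [/existsP [z0 /eqP az0]|] := boolP [exists z, fibre_size X z == 0].
  apply: leq_trans (leq_trans xi_lt (geq_minl _ _)) _.
  by rewrite -mulnn -mulnA; apply: crossing_ge_full_empty ax0 az0.
(* no fibre is empty, so no fibre of the complement is full *)
rewrite negb_exists => /forallP a_pos; rewrite -card_crossingC //.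
apply: crossing_gt_nonfull => // x; rewrite fibre_sizeC.
by have := a_pos x; have := fibre_size_le X x; lia.
Qed.

End Bounds.

End StrongProduct.

Theorem corollary3p9 (T : finType) (e : rel T) (n : nat) :
  simple_graph e -> connected_graph e -> 2 <= #|T| -> 4 <= n ->
  minn (n ^ 2 * edge_conn e) ((n - 1) * (#|T| + 2 * nedges e))
    > 2 * n * min_degree e + 2 * n - 4 ->
  super_restricted_edge_connected (strong_product e (complete_graph n)).
Proof.
move=> e_simple e_conn T_gt1 n_gt3 xi_lt S [S_restr S_min].
set H := strong_product e (complete_graph n) in S_restr S_min *.
have [/existsP [x /eqP]|] := boolP [exists x, #|comp_of H S x| == 2]; first by exists x.
rewrite negb_exists => /forallP no_edge_comp; exfalso.
have [e_sym _] := e_simple.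
have H_sym := strong_product_sym e_sym (@complete_graph_sym n).
have [x [comp_gt2 compC_gt2]] := restricted_cut_large_comp H_sym S_restr no_edge_comp.
have [x0 dx0] := min_degree_attained e_simple (ltnW T_gt1).
have n_gt1 : 1 < n by lia.
pose i0 : 'I_n := Ordinal (ltnW n_gt1); pose i1 : 'I_n := Ordinal n_gt1.
have i01 : i0 != i1 by [].
have S_le : #|S| <= 2 * n * min_degree e + 2 * n - 4.
  apply: leq_trans (S_min _ (restricted_isolating_cut e_simple n_gt3 x0 i01)) _.
  by rewrite -dx0 card_isolating_cut_layer.
have := crossing_gt e_simple e_conn T_gt1 n_gt3 xi_lt comp_gt2 compC_gt2.
by rewrite ltnNge (leq_trans (card_crossing_comp_le _ _ x) S_le).
Qed.
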